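(* In the line network setting of the context, let $\lambda_{\min}>0$ be such that (P) is feasible for both $\mathbf{G}_{\mathrm{HD}}$ and $\mathbf{G}_{\mathrm{FD}}$ with $t^*_{\mathrm{HD}}>0$. Let $\eta\in(0,1)$, $\delta^*_{\mathrm{HD}}=-\log(1-\eta)/t^*_{\mathrm{HD}}$, $\delta^*_{\mathrm{FD}}=-\log(1-\eta)/t^*_{\mathrm{FD}}$, and $\ell=\delta^*_{\mathrm{HD}}/\delta^*_{\mathrm{FD}}$. Then with $$\Lambda_1=\frac{R_a}{4(K+1)\left(\frac{R_a}{R_b}\right)^2+(2K+3)w\frac{R_a}{R_b}+w},\qquad \Lambda_2=\frac{R_a}{(K+1)\left(\frac{R_a}{R_b}\right)^2+(K+1)w\frac{R_a}{R_b}+w},$$ $$\ell=\begin{cases}\dfrac{1-w\lambda_{\min}\left(\frac1{R_b}+\frac1{R_a}\right)}{1-w\lambda_{\min}\left(\frac3{R_b}+\frac1{R_a}\right)}\cdot\dfrac{\frac{2(K+1)}{R_b}+\frac{Kw}{R_a}}{\frac{K+1}{R_b}+\frac{Kw}{R_a}}, & \lambda_{\min}\le\Lambda_1,\\[3ex] \dfrac{1-w\lambda_{\min}\left(\frac1{R_b}+\frac1{R_a}\right)}{1-w\lambda_{\min}\left(\frac{2K-1}{R_b}+\frac1{R_a}\right)}\cdot\dfrac{\frac{2(K+1)}{R_b}+\frac{2w}{R_a}}{\frac{K+1}{R_b}+\frac{Kw}{R_a}}, & \Lambda_1<\lambda_{\min}\le\Lambda_2,\\[3ex] 2\,\dfrac{1-w\lambda_{\min}\left(\frac{K}{R_b}+\frac1{R_a}\right)}{1-w\lambda_{\min}\left(\frac{2K-1}{R_b}+\frac1{R_a}\right)},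 & \lambda_{\min}>\Lambda_2.\end{cases}$$
   Context: General setting: a rooted tree with root the donor (vertex $0$), other internal vertices IAB nodes $1,\dots,K$, leaves $M$ user equipments (UEs); vertices $0,\dots,K$ are base stations (BSs). Each non-root vertex $v$ has a unique parent and the edge from its parent to $v$ is indexed by $v$; $\mathcal{E}$ is the edge set. For each UE $m$, $\mathsf{R}(m)$ is the set of edges on the path from $0$ to $m$ and $h_m=|\mathsf{R}(m)|$. $\mathbf{F}\in\{0,1\}^{|\mathcal{E}|\times M}$ has $F_{v,m}=1$ iff $v\in\mathsf{R}(m)$. $\mathbf{C}=\mathrm{diag}(c_v)$ with $c_v>0$ the capacity of edge $v$. Half-duplex scheduling matrix $\mathbf{G}_{\mathrm{HD}}\in\{0,1\}^{(K+1)\times|\mathcal{E}|}$: $[\mathbf{G}_{\mathrm{HD}}]_{k,v}=1$ iff BS $k$ is the parent or the child of edge $v$; full-duplex $\mathbf{G}_{\mathrm{FD}}$: $[\mathbf{G}_{\mathrm{FD}}]_{k,v}=1$ iff BS $k$ is the parent of edge $v$. Problem (P) for a given $\mathbf{G}$ and $\lambda_{\min}>0$: maximize $t$ over $(t,\boldsymbol{\lambda},\boldsymbol{\mu})\in\mathbb{R}\times\mathbb{R}^M\times\mathbb{R}^{|\mathcal{E}|}$ subject to $\boldsymbol{\lambda}\ge\lambda_{\min}\mathbf{1}$, $\mathbf{0}\le\boldsymbol{\mu}\le\mathbf{1}$, $t\ge0$, $\mathbf{G}\boldsymbol{\mu}\le\mathbf{1}$, and $c_v\mu_v-(\mathbf{F}\boldsymbol{\lambda})_v\ge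 t\,h_m$ for every UE $m$ and every $v\in\mathsf{R}(m)$; $t^*_{\mathrm{HD}}$, $t^*_{\mathrm{FD}}$ denote its optimal values for $\mathbf{G}_{\mathrm{HD}}$, $\mathbf{G}_{\mathrm{FD}}$. Line network: $K\ge2$; IAB node $k$ is the child of BS $k-1$ for $k=1,\dots,K$; each BS $k\in\{0,\dots,K\}$ has, in addition, exactly $w\ge1$ UE children and no other children. Each backhaul edge (into an IAB node) has capacity $R_b$ and each access edge (into a UE) has capacity $R_a$, where $0<R_a<R_b$. Additionally assume $wR_b\le (K+1)R_a$. The same $\mathbf{C}$ is used for both the HD and FD cases. *)

From HB Require Import structures.
From mathcomp Require Import all_boot all_order all_algebra.
From mathcomp Require Import all_classical all_reals.
From mathcomp Require Import exp.
Set Implicit Arguments. Unset Strict Implicit. Unset Printing Implicit Defensive.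
Import Order.TTheory GRing.Theory Num.Theory.
Local Open Scope ring_scope.

Section Tree.
Variables (V : finType) (root : V) (par : V -> V).

Definition anc (u v : V) : bool := [exists n : 'I_#|V|.+1, iter n par v == u].

(* Edges are indexed by the non-root vertices (edge v = from par v to v).
   R(m) = set of edges on the path from the root to m. *)
Definition route (m : V) : {set V} := [set v | (v != root) && anc v m].
Definition hops (m : V) : nat := #|route m|.
Definition Fmat (v m : V) : bool := v \in route m.
Definition G_HD (k v : V) : bool := (v != root) && ((par v == k) || (v == k)).
Definition G_FD (k v : V) : bool := (v != root) && (par v == k).

Variables (R : realType) (isBS isUE : pred V) (cap : V -> R)
          (G : V -> V -> bool) (lmin : R).

(* feasibility of (t, lambda, mu) for problem (P); lambda is read on UEs,
   mu on edges (non-root vertices). *)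
Definition feasibleP (t : R) (lam mu : V -> R) : Prop :=
  [/\ (forall m, isUE m -> lmin <= lam m),
      (forall v, v != root -> 0 <= mu v <= 1),
      0 <= t,
      (forall k, isBS k -> \sum_(v | v != root) (G k v)%:R * mu v <= 1) &
      (forall m v, isUE m -> v \in route m ->
          t * (hops m)%:R <=
          cap v * mu v - \sum_(m' | isUE m') (Fmat v m')%:R * lam m')].

Definition is_optP (t : R) : Prop :=
  (exists lam mu, feasibleP t lam mu) /\
  (forall t' lam mu, feasibleP t' lam mu -> t' <= t).
End Tree.

(* Vertices: inl k = BS k (k = 0..K; 0 = donor), inr (k, j) = j-th UE child of BS k. *)
Definition lineV (K w : nat) : finType := ('I_K.+1 + ('I_K.+1 * 'I_w))%type.

Definition line_root (K w : nat) : lineV K w := inl ord0.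

Definition line_par (K w : nat) (v : lineV K w) : lineV K w :=
  match v with
  | inl k => inl (inord k.-1)
  | inr kj => inl kj.1
  end.

Definition line_isBS (K w : nat) : pred (lineV K w) :=
  fun v => if v is inl _ then true else false.
Definition line_isUE (K w : nat) : pred (lineV K w) :=
  fun v => if v is inr _ then true else false.

(* backhaul edges (into IAB nodes) have capacity Rb, access edges capacity Ra *)
Definition line_cap (R : realType) (K w : nat) (Ra Rb : R) (v : lineV K w) : R :=
  if v is inl _ then Rb else Ra.

Definition line_opt (R : realType) (K w : nat) (Ra Rb lmin : R)
    (G : lineV K w -> lineV K w -> bool) (t : R) : Prop :=
  is_optP (line_root K w) (line_par (w:=w)) (line_isBS (w:=w)) (line_isUE (w:=w))
          (line_cap Ra Rb) G lmin t.

Definition line_GHD (K w : nat) := G_HD (line_root K w) (line_par (w:=w)).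
Definition line_GFD (K w : nat) := G_FD (line_root K w) (line_par (w:=w)).

From HB Require Import structures.
From mathcomp Require Import all_boot all_order all_algebra.
From mathcomp Require Import all_classical all_reals.
From mathcomp Require Import exp.
From mathcomp Require Import zify ring lra.
Set Implicit Arguments. Unset Strict Implicit. Unset Printing Implicit Defensive.
Import Order.TTheory GRing.Theory Num.Theory.
Local Open Scope ring_scope.

(* Fix t and give every UE exactly the rate lmin.  Edge v then needs the airtime share
   min_share t v = (t * hops of the deepest UE behind v + lmin * number of UEs behind v) / c_v,
   and these minimal shares are feasible as soon as they satisfy every base-station
   constraint, so t is feasible iff all BS loads of min_share t are at most 1.  Along the line
   the load of BS k is affine in k, hence only the extreme stations bind: BS 1 and BS K-1 in
   half duplex, BS 0 and BS K-1 in full duplex.  Each optimum is thus the smaller of two ratios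
   N / D, and which one is decided by the sign of the cross difference N1 D2 - N2 D1, a
   nonnegative multiple of Ra - lmin * Ra / Lam1 (half duplex), resp. Ra - lmin * Ra / Lam2
   (full duplex).  Finally l = t*_FD / t*_HD. *)

Lemma sum_ord_leq (n i : nat) : (\sum_(a < n) (i <= a : nat))%N = (n - i)%N.
Proof.
elim: n => [|n IH]; first by rewrite big_ord0.
by rewrite big_ord_recr /= IH; case: (leqP i n) => /=; lia.
Qed.

Lemma sum_ord_pos_leq (n k : nat) : (\sum_(a < n) (0 < a <= k : nat))%N = minn n.-1 k.
Proof.
elim: n => [|n IH]; first by rewrite big_ord0 min0n.
rewrite big_ord_recr /= IH; case: n IH => [|n] _ /=; first by rewrite min0n.
by case: (leqP n.+1 k) => /=; lia.
Qed.

Lemma sum_ord_cond_eq (R : nmodType) (n : nat) (a : nat) (F : 'I_n.+1 -> R) :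
  \sum_(i < n.+1) (if (i : nat) == a then F i else 0) =
  if (a < n.+1)%N then F (inord a) else 0.
Proof.
rewrite -big_mkcond /=; case: ifP => ha.
  by rewrite (big_pred1 (inord a)) // => i /=; rewrite -val_eqE /= inordK.
by rewrite big_pred0 // => i; apply/eqP => ia; rewrite -ia ltn_ord in ha.
Qed.

Lemma share_le_sched_sum (V : finType) (root : V) (R : numDomainType)
    (G : V -> V -> bool) (mu : V -> R) (k v : V) :
  (forall u, u != root -> 0 <= mu u) -> v != root -> G k v ->
  mu v <= \sum_(u | u != root) (G k u)%:R * mu u.
Proof.
move=> mu_ge0 v_nr Gkv; rewrite (bigD1 v) //= Gkv mul1r lerDl.
by apply: sumr_ge0 => u /andP[u_nr _]; rewrite mulr_ge0 ?mu_ge0.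
Qed.

Lemma le_affine_between (R : realDomainType) (a b c x y z : R) :
  x <= y -> y <= z -> a + b * x <= c -> a + b * z <= c -> a + b * y <= c.
Proof. by move=> le_xy le_yz; case: (lerP 0 b) => b_sgn; nra. Qed.

Lemma ler_ratio (R : realFieldType) (N1 D1 N2 D2 : R) :
  0 < D1 -> 0 < D2 -> (N1 / D1 <= N2 / D2) = (N1 * D2 <= N2 * D1).
Proof. by move=> D1_gt0 D2_gt0; rewrite ler_pdivrMr // mulrAC ler_pdivlMr. Qed.

(* No side conditions: with 0^-1 = 0 both sides equal a * b^-1 * c^-1 * d. *)
Lemma div_ratio (R : fieldType) (a b c d : R) : (a / b) / (c / d) = a / c * (d / b).
Proof. by rewrite invf_div; ring. Qed.

Lemma optimum_eq_min_ratio (R : realFieldType) (P : R -> Prop) (N1 D1 N2 D2 t : R) :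
  0 < D1 -> 0 < D2 ->
  (forall x, P x -> [/\ 0 <= x, D1 * x <= N1 & D2 * x <= N2]) ->
  (forall x, 0 <= x -> D1 * x <= N1 -> D2 * x <= N2 -> P x) ->
  P t -> (forall x, P x -> x <= t) -> t = Num.min (N1 / D1) (N2 / D2).
Proof.
move=> D1_gt0 D2_gt0 necessary sufficient Pt t_max; have [t_ge0 t_le1 t_le2] := necessary t Pt.
have t_le_min : t <= Num.min (N1 / D1) (N2 / D2).
  by rewrite le_min !ler_pdivlMr // ![t * _]mulrC t_le1 t_le2.
apply/le_anti; rewrite t_le_min t_max //; apply: sufficient.
- exact: le_trans t_le_min.
- by rewrite mulrC -ler_pdivlMr // ge_min lexx.
- by rewrite mulrC -ler_pdivlMr // ge_min lexx orbT.
Qed.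

Section LineTopology.
Variables K w : nat.
Local Notation V := (lineV K w).
Local Notation root := (line_root K w).
Local Notation par := (@line_par K w).

Lemma line_inl_eq (a b : 'I_K.+1) : (inl a == inl b :> V) = (a == b :> nat).
Proof. by apply/eqP/eqP => [[->]|/val_inj ->]. Qed.

Lemma line_inr_inl_eq (x : 'I_K.+1 * 'I_w) (a : 'I_K.+1) : (inr x == inl a :> V) = false.
Proof. by []. Qed.

Lemma line_inl_neq_root (i : 'I_K.+1) : (inl i != root) = (0 < i)%N.
Proof. by rewrite line_inl_eq lt0n. Qed.

Lemma iter_line_par_inr (k : 'I_K.+1) (j : 'I_w) (n : nat) :
  iter n.+1 par (inr (k, j)) = inl (inord (k - n)).
Proof.
elim: n => [|n IH]; first by rewrite /= subn0 inord_val.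
rewrite iterS IH /= inordK; first by rewrite subnS.
by rewrite ltnS (leq_trans (leq_subr _ _)) // -ltnS.
Qed.

Lemma mem_route_inl (i k : 'I_K.+1) (j : 'I_w) :
  (inl i \in route root par (inr (k, j))) = (0 < i <= k)%N.
Proof.
rewrite /route inE line_inl_neq_root; case: (posnP i) => [i0|i_gt0]; first by rewrite i0.
rewrite /=; apply/existsP/idP => [[[[|n] lt_n]]|le_ik] //.
  rewrite iter_line_par_inr => /eqP [<-]; rewrite inordK; first exact: leq_subr.
  by rewrite ltnS (leq_trans (leq_subr _ _)) // -ltnS.
have lt_n : ((k - i).+1 < #|V|.+1)%N.
  rewrite ltnS card_sum card_ord (leq_trans _ (leq_addr _ _)) // ltnS.
  by rewrite (leq_trans (leq_subr _ _)) // -ltnS.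
by exists (Ordinal lt_n); rewrite iter_line_par_inr subKn // line_inl_eq inordK.
Qed.

Lemma mem_route_inr (x y : 'I_K.+1 * 'I_w) :
  (inr x \in route root par (inr y)) = (x == y).
Proof.
rewrite /route inE /=; case: y => k j.
apply/existsP/eqP => [[[[|n] lt_n]]|<-]; last by exists ord0.
  by move/eqP => [].
by rewrite iter_line_par_inr.
Qed.

Lemma line_hops_inr (k : 'I_K.+1) (j : 'I_w) : hops root par (inr (k, j)) = k.+1.
Proof.
rewrite /hops -sum1_card big_mkcond /= big_sumType /=.
under eq_bigr => i _ do rewrite mem_route_inl.
under [X in (_ + X)%N]eq_bigr => x _ do rewrite mem_route_inr.
rewrite sum_ord_pos_leq -big_mkcond /= big_pred1_eq.
by have := ltn_ord k; lia.
Qed.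

Definition ue_load (v : V) : nat := (\sum_(m | line_isUE m) Fmat root par v m)%N.

Lemma ue_load_inl (i : 'I_K.+1) : (0 < i)%N -> ue_load (inl i) = (w * (K.+1 - i))%N.
Proof.
move=> i_gt0; rewrite /ue_load big_sumType /= big_pred0 // add0n.
rewrite (eq_bigr (fun x : 'I_K.+1 * 'I_w => (i <= x.1 : nat))); last first.
  by move=> [a b] _; rewrite /Fmat mem_route_inl i_gt0.
rewrite -(pair_bigA _ (fun (a : 'I_K.+1) (_ : 'I_w) => (i <= a : nat))) /=.
under eq_bigr => a _ do rewrite sum_nat_const card_ord.
by rewrite -big_distrr /= sum_ord_leq mulnC.
Qed.

Lemma ue_load_inr (x : 'I_K.+1 * 'I_w) : ue_load (inr x) = 1%N.
Proof.
rewrite /ue_load big_sumType /= big_pred0 // add0n.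
under eq_bigr => y _ do rewrite /Fmat mem_route_inr eq_sym.
by rewrite -big_mkcond /= big_pred1_eq.
Qed.

Lemma line_GHD_inl (k i : 'I_K.+1) :
  @line_GHD K w (inl k) (inl i) = (i == k.+1 :> nat) || (0 < k)%N && (i == k :> nat).
Proof.
rewrite /line_GHD /G_HD line_inl_neq_root /= !line_inl_eq inordK; last first.
  by have := ltn_ord i; lia.
by case: i => i /=; case: k => k /=; lia.
Qed.

Lemma line_GFD_inl (k i : 'I_K.+1) : @line_GFD K w (inl k) (inl i) = (i == k.+1 :> nat).
Proof.
rewrite /line_GFD /G_FD line_inl_neq_root /= line_inl_eq inordK; last first.
  by have := ltn_ord i; lia.
by case: i => i /=; case: k => k /=; lia.
Qed.

Section ScheduleSums.
Variables (R : pzSemiRingType) (mu : V -> R).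

Lemma sum_access_edges (k : 'I_K.+1) (G : V -> V -> bool) :
  (forall x : 'I_K.+1 * 'I_w, G (inl k) (inr x) = (x.1 == k)) ->
  \sum_(x : 'I_K.+1 * 'I_w) (G (inl k) (inr x))%:R * mu (inr x) =
  \sum_(b < w) mu (inr (k, b)).
Proof.
move=> G_acc; rewrite (eq_bigr (fun x => (x.1 == k)%:R * mu (inr (x.1, x.2)))); last first.
  by move=> [a b] _; rewrite G_acc.
rewrite -(pair_bigA _ (fun a b => (a == k)%:R * mu (inr (a, b)))) /=.
rewrite (bigD1 k) //= [X in _ + X]big1 ?addr0; last first.
  by move=> a /negbTE ne_ak; rewrite big1 // => b _; rewrite ne_ak mul0r.
by apply: eq_bigr => b _; rewrite eqxx mul1r.
Qed.

Lemma sum_line_GHD (k : 'I_K.+1) :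
  \sum_(v | v != root) (@line_GHD K w (inl k) v)%:R * mu v =
  (if (k < K)%N then mu (inl (inord k.+1)) else 0)
  + (if (0 < k)%N then mu (inl k) else 0) + \sum_(b < w) mu (inr (k, b)).
Proof.
rewrite big_mkcond big_sumType /= sum_access_edges; last first.
  by move=> [a b]; rewrite /line_GHD /G_HD /= line_inl_eq line_inr_inl_eq orbF.
congr (_ + _).
have split_term (i : 'I_K.+1) :
    (if inl i != root then (@line_GHD K w (inl k) (inl i))%:R * mu (inl i) else 0) =
    (if (i == k.+1 :> nat) then mu (inl i) else 0)
    + (if (0 < k)%N && (i == k :> nat) then mu (inl i) else 0).
  rewrite line_GHD_inl line_inl_neq_root.
  case: (i == k.+1 :> nat) / eqP; case: ((0 < k)%N && (i == k :> nat)) / andP;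
    case: (posnP i); rewrite ?mul1r ?mul0r ?addr0 ?add0r //; lia.
under eq_bigr => i _ do rewrite split_term.
rewrite big_split sum_ord_cond_eq ltnS /=; congr (_ + _).
case: (posnP k) => [k0|k_gt0] /=; first by rewrite big1.
by rewrite -big_mkcond /= (big_pred1 k) // => i; rewrite /= -val_eqE.
Qed.

Lemma sum_line_GFD (k : 'I_K.+1) :
  \sum_(v | v != root) (@line_GFD K w (inl k) v)%:R * mu v =
  (if (k < K)%N then mu (inl (inord k.+1)) else 0) + \sum_(b < w) mu (inr (k, b)).
Proof.
rewrite big_mkcond big_sumType /= sum_access_edges; last first.
  by move=> [a b]; rewrite /line_GFD /G_FD /= line_inl_eq.
congr (_ + _); rewrite -ltnS -(@sum_ord_cond_eq _ K k.+1 (fun i => mu (inl i))).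
apply: eq_bigr => i _.
rewrite line_GFD_inl line_inl_neq_root.
by case: eqP => [-> /=|_]; rewrite ?mul1r ?mul0r; case: (0 < i)%N.
Qed.

End ScheduleSums.
End LineTopology.

Section LineFeasibility.
Variables (R : realType) (K w : nat) (Ra Rb lmin : R).
Hypotheses (Ra_gt0 : 0 < Ra) (Rb_gt0 : 0 < Rb).
Local Notation V := (lineV K w).
Local Notation root := (line_root K w).
Local Notation par := (@line_par K w).
Local Notation feasible G :=
  (feasibleP root par (@line_isBS K w) (@line_isUE K w) (line_cap Ra Rb) G lmin).

(* Hop count of the deepest UE whose route uses edge v. *)
Definition line_depth (v : V) : nat := if v is inr x then x.1.+1 else K.+1.

Definition min_share (t : R) (v : V) : R :=
  ((line_depth v)%:R * t + lmin * (ue_load v)%:R) / line_cap Ra Rb v.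

Lemma line_cap_gt0 (v : V) : 0 < line_cap Ra Rb v.
Proof. by case: v. Qed.

Lemma ue_load_le_sum (lam : V -> R) (v : V) :
  (forall m, line_isUE m -> lmin <= lam m) ->
  lmin * (ue_load v)%:R <= \sum_(m | line_isUE m) (Fmat root par v m)%:R * lam m.
Proof.
move=> lam_ge; rewrite /ue_load natr_sum mulr_sumr; apply: ler_sum => m UEm.
by rewrite mulrC ler_wpM2l ?lam_ge.
Qed.

Lemma sum_load_const (v : V) :
  \sum_(m | line_isUE m) (Fmat root par v m)%:R * lmin = lmin * (ue_load v)%:R.
Proof. by rewrite /ue_load natr_sum mulr_sumr; apply: eq_bigr => m _; rewrite mulrC. Qed.

Lemma feasible_min_share_le (G : V -> V -> bool) (t : R) (lam mu : V -> R) (v : V) :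
  (0 < w)%N -> feasible G t lam mu -> v != root -> min_share t v <= mu v.
Proof.
move=> w_gt0 [lam_ge _ _ _ route_ge] v_nr.
have [m UEm [route_m hops_m]] : exists2 m, line_isUE m &
    v \in route root par m /\ hops root par m = line_depth v.
  case: v v_nr => [i|[k j]] v_nr.
    exists (inr (ord_max, Ordinal w_gt0)) => //.
    by rewrite mem_route_inl -(line_inl_neq_root w) v_nr -ltnS ltn_ord line_hops_inr.
  by exists (inr (k, j)); rewrite ?mem_route_inr ?line_hops_inr.
rewrite /min_share ler_pdivrMr ?line_cap_gt0 // mulrC.
have := route_ge m v UEm route_m; rewrite hops_m.
by have := ue_load_le_sum v lam_ge; lra.
Qed.

Lemma feasible_sched_min_share (G : V -> V -> bool) (t : R) (lam mu : V -> R) (k : 'I_K.+1) :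
  (0 < w)%N -> feasible G t lam mu ->
  \sum_(v | v != root) (G (inl k) v)%:R * min_share t v <= 1.
Proof.
move=> w_gt0 feas; have [_ _ _ sched_le _] := feas.
apply: le_trans (sched_le (inl k) isT); apply: ler_sum => v v_nr.
by rewrite ler_wpM2l // (feasible_min_share_le w_gt0 feas v_nr).
Qed.

Lemma min_share_ge0 (t : R) (v : V) : 0 <= t -> 0 <= lmin -> 0 <= min_share t v.
Proof.
move=> t_ge0 lmin_ge0; apply: divr_ge0; last exact: ltW (line_cap_gt0 v).
by rewrite addr_ge0 ?mulr_ge0.
Qed.

Lemma line_depth_route (k : 'I_K.+1) (j : 'I_w) (v : V) :
  v \in route root par (inr (k, j)) -> (k < line_depth v)%N.
Proof. by case: v => [i _|x]; [exact: ltn_ord | rewrite mem_route_inr => /eqP ->]. Qed.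

Lemma min_share_feasible (G : V -> V -> bool) (t : R) :
  0 <= t -> 0 <= lmin -> (forall v, v != root -> G (par v) v) ->
  (forall k : 'I_K.+1, \sum_(v | v != root) (G (inl k) v)%:R * min_share t v <= 1) ->
  feasible G t (fun _ => lmin) (min_share t).
Proof.
move=> t_ge0 lmin_ge0 G_par sched_le; split => //.
- move=> v v_nr; rewrite min_share_ge0 //=.
  have [k par_v] : exists k, par v = inl k by case: (v) => [i|x]; eexists.
  apply: le_trans (sched_le k); rewrite -par_v.
  by apply: share_le_sched_sum v_nr (G_par v v_nr) => u _; apply: min_share_ge0.
- by case.
- move=> [//|[k j]] v _ /line_depth_route depth_v.
  rewrite sum_load_const line_hops_inr /min_share [line_cap _ _ _ * _]mulrC.
  rewrite divfK ?lt0r_neq0 ?line_cap_gt0 // addrK mulrC.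
  by rewrite ler_wpM2r // ler_nat.
Qed.

Definition backhaul_share (t : R) (i : nat) : R :=
  ((K%:R + 1) * t + lmin * w%:R * (K%:R + 1 - i%:R)) / Rb.

Definition access_share (t : R) (k : nat) : R := w%:R * (((k%:R + 1) * t + lmin) / Ra).

Lemma min_share_inl (t : R) (i : 'I_K.+1) :
  (0 < i)%N -> min_share t (inl i) = backhaul_share t i.
Proof.
move=> i_gt0; rewrite /min_share /backhaul_share /= ue_load_inl //.
by rewrite natrM natrB 1?ltnW // -!natr1 mulrA.
Qed.

Lemma sum_min_share_inr (t : R) (k : 'I_K.+1) :
  \sum_(b < w) min_share t (inr (k, b)) = access_share t k.
Proof.
under eq_bigr => b _ do rewrite /min_share /= ue_load_inr mulr1 -[(k.+1)%:R]natr1.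
by rewrite sumr_const card_ord /access_share mulr_natl.
Qed.

Lemma min_share_inl_next (t : R) (k : 'I_K.+1) :
  (if (k < K)%N then min_share t (inl (inord k.+1)) else 0) =
  (if (k < K)%N then backhaul_share t k.+1 else 0).
Proof.
case: ifP => // k_lt.
have k1_val : ((inord k.+1 : 'I_K.+1) : nat) = k.+1 by rewrite inordK.
by rewrite min_share_inl k1_val.
Qed.

Lemma sched_GHD_min_share (t : R) (k : 'I_K.+1) :
  \sum_(v | v != root) (@line_GHD K w (inl k) v)%:R * min_share t v =
  (if (k < K)%N then backhaul_share t k.+1 else 0)
  + (if (0 < k)%N then backhaul_share t k else 0) + access_share t k.
Proof.
rewrite sum_line_GHD sum_min_share_inr -min_share_inl_next.
have [k0|k_gt0] := posnP k; first by rewrite k0.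
by rewrite (min_share_inl _ k_gt0).
Qed.

Lemma sched_GFD_min_share (t : R) (k : 'I_K.+1) :
  \sum_(v | v != root) (@line_GFD K w (inl k) v)%:R * min_share t v =
  (if (k < K)%N then backhaul_share t k.+1 else 0) + access_share t k.
Proof.
by rewrite sum_line_GFD sum_min_share_inr -min_share_inl_next.
Qed.

Section LineOptimum.
Hypotheses (K_ge2 : (2 <= K)%N) (w_gt0 : (0 < w)%N) (lmin_ge0 : 0 <= lmin).
Hypothesis access_le_backhaul : w%:R * Rb <= (K.+1)%:R * Ra.

(* Numerator N and denominator D of the bound D * t <= N imposed by one base station:
   BS 1 (HD1), BS 0 (FD0) or BS K-1 (HDK, FDK); moreover Lam1 = Ra / den1, Lam2 = Ra / den2. *)
Local Notation NHD1 := (1 - w%:R * lmin * ((2 * K%:R - 1) / Rb + 1 / Ra)).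
Local Notation DHD1 := (2 * (K.+1)%:R / Rb + 2 * w%:R / Ra).
Local Notation NHDK := (1 - w%:R * lmin * (3 / Rb + 1 / Ra)).
Local Notation DHDK := (2 * (K.+1)%:R / Rb + K%:R * w%:R / Ra).
Local Notation NFD0 := (1 - w%:R * lmin * (K%:R / Rb + 1 / Ra)).
Local Notation DFD0 := ((K.+1)%:R / Rb + w%:R / Ra).
Local Notation NFDK := (1 - w%:R * lmin * (1 / Rb + 1 / Ra)).
Local Notation DFDK := ((K.+1)%:R / Rb + K%:R * w%:R / Ra).
Local Notation den1 :=
  (4 * (K.+1)%:R * (Ra / Rb) ^+ 2 + (2 * K%:R + 3) * w%:R * (Ra / Rb) + w%:R).
Local Notation den2 := ((K.+1)%:R * (Ra / Rb) ^+ 2 + (K.+1)%:R * w%:R * (Ra / Rb) + w%:R).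

Lemma HD_bounds_of_feasible (t : R) (lam mu : V -> R) :
  feasible (@line_GHD K w) t lam mu -> DHD1 * t <= NHD1 /\ DHDK * t <= NHDK.
Proof.
move=> feas; have sched (k : nat) := feasible_sched_min_share (inord k) w_gt0 feas.
have := sched 1%N; have := sched K.-1.
rewrite !sched_GHD_min_share !inordK; try lia.
have [K1_lt K1_gt0] : (K.-1 < K)%N /\ (0 < K.-1)%N by lia.
have predK : (K.-1)%:R = K%:R - 1 :> R by rewrite -subn1 natrB // ltnW.
rewrite K_ge2 K1_lt K1_gt0 (prednK (ltnW K_ge2)) /backhaul_share /access_share predK /=.
rewrite -[(K.+1)%:R]natr1 => bsK bs1; split; lra.
Qed.

Lemma FD_bounds_of_feasible (t : R) (lam mu : V -> R) :
  feasible (@line_GFD K w) t lam mu -> DFD0 * t <= NFD0 /\ DFDK * t <= NFDK.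
Proof.
move=> feas; have sched (k : nat) := feasible_sched_min_share (inord k) w_gt0 feas.
have := sched 0%N; have := sched K.-1.
rewrite !sched_GFD_min_share !inordK; try lia.
have predK : (K.-1)%:R = K%:R - 1 :> R by rewrite -subn1 natrB // ltnW.
have K1_lt : (K.-1 < K)%N by lia.
rewrite K1_lt (ltnW K_ge2) (prednK (ltnW K_ge2)) /backhaul_share /access_share predK /=.
rewrite -[(K.+1)%:R]natr1 => fdK fd0; split; lra.
Qed.

Lemma access_share_le_backhaul : w%:R / Ra <= (K.+1)%:R / Rb.
Proof. by rewrite ler_ratio. Qed.

Lemma HD_load_le1 (t : R) (n : nat) :
  0 <= t -> (n <= K)%N -> DHD1 * t <= NHD1 -> DHDK * t <= NHDK ->
  (if (n < K)%N then backhaul_share t n.+1 else 0)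
  + (if (0 < n)%N then backhaul_share t n else 0) + access_share t n <= 1.
Proof.
move=> t_ge0 n_le; rewrite /backhaul_share /access_share -[(K.+1)%:R]natr1 => hd1 hdK.
have K_ge1 : 1 <= K%:R :> R by rewrite ler1n ltnW.
have tRb_ge0 : 0 <= t / Rb by rewrite divr_ge0 // ltW.
have tRa_ge0 : 0 <= w%:R * t / Ra by rewrite divr_ge0 ?mulr_ge0 // ltW.
have lRb_ge0 : 0 <= w%:R * lmin / Rb by rewrite divr_ge0 ?mulr_ge0 // ltW.
have [-> /=|n_gt0] := posnP n; first by rewrite (ltnW K_ge2); nra.
case: ltnP => [n_lt|n_ge]; last first.
  have -> : n = K by lia.
  have := ler_wpM2r t_ge0 access_share_le_backhaul; rewrite -natr1; nra.
rewrite -natr1; set A := (2 * (K%:R + 1) * t + lmin * w%:R * (2 * K%:R + 1)) / Rb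
                    + w%:R * ((t + lmin) / Ra).
set B := w%:R * t / Ra - 2 * lmin * w%:R / Rb.
have n_ge1 : 1 <= n%:R :> R by rewrite ler1n.
have n_leK1 : n%:R <= K%:R - 1 :> R by rewrite lerBrDr natr1 ler_nat.
have := le_affine_between (a := A) (b := B) (c := 1) n_ge1 n_leK1.
rewrite /A /B; lra.
Qed.

Lemma FD_load_le1 (t : R) (n : nat) :
  0 <= t -> (n <= K)%N -> DFD0 * t <= NFD0 -> DFDK * t <= NFDK ->
  (if (n < K)%N then backhaul_share t n.+1 else 0) + access_share t n <= 1.
Proof.
move=> t_ge0 n_le; rewrite /backhaul_share /access_share -[(K.+1)%:R]natr1 => fd0 fdK.
have lRb_ge0 : 0 <= w%:R * lmin / Rb by rewrite divr_ge0 ?mulr_ge0 // ltW.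
case: ltnP => [n_lt|n_ge]; last first.
  have -> : n = K by lia.
  have := ler_wpM2r t_ge0 access_share_le_backhaul; rewrite -natr1; nra.
rewrite -natr1; set A := ((K%:R + 1) * t + lmin * w%:R * K%:R) / Rb + w%:R * ((t + lmin) / Ra).
set B := w%:R * t / Ra - lmin * w%:R / Rb.
have n_ge0 : 0 <= n%:R :> R by [].
have n_leK1 : n%:R <= K%:R - 1 :> R by rewrite lerBrDr natr1 ler_nat.
have := le_affine_between (a := A) (b := B) (c := 1) n_ge0 n_leK1.
rewrite /A /B; lra.
Qed.

Lemma HD_feasible_of_bounds (t : R) :
  0 <= t -> DHD1 * t <= NHD1 -> DHDK * t <= NHDK ->
  feasible (@line_GHD K w) t (fun _ => lmin) (min_share t).
Proof.
move=> t_ge0 hd1 hdK; apply: min_share_feasible => // [v v_nr|k].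
  by rewrite /line_GHD /G_HD v_nr eqxx.
by rewrite sched_GHD_min_share HD_load_le1 // -ltnS.
Qed.

Lemma FD_feasible_of_bounds (t : R) :
  0 <= t -> DFD0 * t <= NFD0 -> DFDK * t <= NFDK ->
  feasible (@line_GFD K w) t (fun _ => lmin) (min_share t).
Proof.
move=> t_ge0 fd0 fdK; apply: min_share_feasible => // [v v_nr|k].
  by rewrite /line_GFD /G_FD v_nr eqxx.
by rewrite sched_GFD_min_share FD_load_le1 // -ltnS.
Qed.

Lemma line_denoms_gt0 : [/\ 0 < DHD1, 0 < DHDK, 0 < DFD0 & 0 < DFDK].
Proof.
have K_gt0 : (0 < K)%N := ltnW K_ge2.
by split; rewrite addr_gt0 ?divr_gt0 ?mulr_gt0 ?ltr0n.
Qed.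

Lemma DHD1_div_DFD0 : DHD1 / DFD0 = 2.
Proof.
have [_ _ /lt0r_neq0 DFD0_neq0 _] := line_denoms_gt0.
by rewrite (_ : DHD1 = 2 * DFD0) ?mulfK //; ring.
Qed.

Lemma line_HD_optE (t : R) :
  line_opt Ra Rb lmin (@line_GHD K w) t -> t = Num.min (NHD1 / DHD1) (NHDK / DHDK).
Proof.
case=> feasible_t t_max.
apply: (@optimum_eq_min_ratio _ (fun x => exists lam mu, feasible (@line_GHD K w) x lam mu)).
- by case: line_denoms_gt0.
- by case: line_denoms_gt0.
- move=> x [lam [mu feas]]; have [_ _ x_ge0 _ _] := feas.
  by have [] := HD_bounds_of_feasible feas.
- by move=> x x_ge0 hd1 hdK; exists (fun _ => lmin), (min_share x); apply: HD_feasible_of_bounds.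
- exact: feasible_t.
- by move=> x [lam [mu]]; apply: t_max.
Qed.

Lemma line_FD_optE (t : R) :
  line_opt Ra Rb lmin (@line_GFD K w) t -> t = Num.min (NFD0 / DFD0) (NFDK / DFDK).
Proof.
case=> feasible_t t_max.
apply: (@optimum_eq_min_ratio _ (fun x => exists lam mu, feasible (@line_GFD K w) x lam mu)).
- by case: line_denoms_gt0.
- by case: line_denoms_gt0.
- move=> x [lam [mu feas]]; have [_ _ x_ge0 _ _] := feas.
  by have [] := FD_bounds_of_feasible feas.
- by move=> x x_ge0 fd0 fdK; exists (fun _ => lmin), (min_share x); apply: FD_feasible_of_bounds.
- exact: feasible_t.
- by move=> x [lam [mu]]; apply: t_max.
Qed.

Lemma HD_cross_diff :
  exists2 c, 0 <= c & NHD1 * DHDK - NHDK * DHD1 = c * (Ra - lmin * den1).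
Proof.
exists ((K%:R - 2) * w%:R / Ra ^+ 2).
  apply: divr_ge0; last exact: exprn_ge0 (ltW Ra_gt0).
  by apply: mulr_ge0; rewrite // subr_ge0 (ler_nat _ 2).
by rewrite -[(K.+1)%:R]natr1; field; rewrite !lt0r_neq0.
Qed.

Lemma FD_cross_diff :
  exists2 c, 0 <= c & NFD0 * DFDK - NFDK * DFD0 = c * (Ra - lmin * den2).
Proof.
exists ((K%:R - 1) * w%:R / Ra ^+ 2).
  apply: divr_ge0; last exact: exprn_ge0 (ltW Ra_gt0).
  by apply: mulr_ge0; rewrite // subr_ge0 ler1n ltnW.
by rewrite -[(K.+1)%:R]natr1; field; rewrite !lt0r_neq0.
Qed.

Lemma den2_gt0_le_den1 : 0 < den2 /\ den2 <= den1.
Proof.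
have r_ge0 : 0 <= Ra / Rb by rewrite divr_ge0 ?ltW.
have w_ge1 : 1 <= w%:R :> R by rewrite ler1n.
set r := Ra / Rb in r_ge0 *.
have b1 : 0 <= (K.+1)%:R * r ^+ 2 by rewrite mulr_ge0 ?exprn_ge0 ?ler0n.
have b2 : 0 <= K%:R * w%:R * r by apply: mulr_ge0 => //; apply: mulr_ge0.
have b3 : 0 <= w%:R * r by rewrite mulr_ge0 ?ler0n.
move: b1; rewrite -[(K.+1)%:R]natr1 => b1; split; lra.
Qed.

Lemma Lam1_le_Lam2 : Ra / den1 <= Ra / den2.
Proof.
have [den2_gt0 den2_le] := den2_gt0_le_den1.
by rewrite ler_ratio ?(lt_le_trans den2_gt0) // ler_pM2l.
Qed.

Lemma line_HD_opt_low (t : R) :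
  line_opt Ra Rb lmin (@line_GHD K w) t -> lmin <= Ra / den1 -> t = NHDK / DHDK.
Proof.
have [DHD1_gt0 DHDK_gt0 _ _] := line_denoms_gt0.
have [den2_gt0 /(lt_le_trans den2_gt0) den1_gt0] := den2_gt0_le_den1.
move=> /line_HD_optE -> lmin_le; apply: min_r; rewrite ler_ratio // -subr_ge0.
have [c c_ge0 ->] := HD_cross_diff; apply: mulr_ge0 c_ge0 _.
by rewrite subr_ge0 -ler_pdivlMr.
Qed.

Lemma line_HD_opt_high (t : R) :
  line_opt Ra Rb lmin (@line_GHD K w) t -> Ra / den1 < lmin -> t = NHD1 / DHD1.
Proof.
have [DHD1_gt0 DHDK_gt0 _ _] := line_denoms_gt0.
have [den2_gt0 /(lt_le_trans den2_gt0) den1_gt0] := den2_gt0_le_den1.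
move=> /line_HD_optE -> lmin_gt; apply: min_l; rewrite ler_ratio // -subr_le0.
have [c c_ge0 ->] := HD_cross_diff; apply: mulr_ge0_le0 c_ge0 _.
by rewrite subr_le0 ltW // -ltr_pdivrMr.
Qed.

Lemma line_FD_opt_low (t : R) :
  line_opt Ra Rb lmin (@line_GFD K w) t -> lmin <= Ra / den2 -> t = NFDK / DFDK.
Proof.
have [_ _ DFD0_gt0 DFDK_gt0] := line_denoms_gt0; have [den2_gt0 _] := den2_gt0_le_den1.
move=> /line_FD_optE -> lmin_le; apply: min_r; rewrite ler_ratio // -subr_ge0.
have [c c_ge0 ->] := FD_cross_diff; apply: mulr_ge0 c_ge0 _.
by rewrite subr_ge0 -ler_pdivlMr.
Qed.

Lemma line_FD_opt_high (t : R) :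
  line_opt Ra Rb lmin (@line_GFD K w) t -> Ra / den2 < lmin -> t = NFD0 / DFD0.
Proof.
have [_ _ DFD0_gt0 DFDK_gt0] := line_denoms_gt0; have [den2_gt0 _] := den2_gt0_le_den1.
move=> /line_FD_optE -> lmin_gt; apply: min_l; rewrite ler_ratio // -subr_le0.
have [c c_ge0 ->] := FD_cross_diff; apply: mulr_ge0_le0 c_ge0 _.
by rewrite subr_le0 ltW // -ltr_pdivrMr.
Qed.

End LineOptimum.
End LineFeasibility.

Theorem corollary1 (R : realType) (K w : nat) (Ra Rb lmin eta tHD tFD : R) :
  (2 <= K)%N -> (1 <= w)%N ->
  0 < Ra -> Ra < Rb -> w%:R * Rb <= (K.+1)%:R * Ra ->
  0 < lmin ->
  line_opt Ra Rb lmin (@line_GHD K w) tHD ->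
  line_opt Ra Rb lmin (@line_GFD K w) tFD ->
  0 < tHD ->
  0 < eta < 1 ->
  let dHD := - ln (1 - eta) / tHD in
  let dFD := - ln (1 - eta) / tFD in
  let l := dHD / dFD in
  let r := Ra / Rb in
  let Lam1 := Ra / (4 * (K.+1)%:R * r ^+ 2 + (2 * K%:R + 3) * w%:R * r + w%:R) in
  let Lam2 := Ra / ((K.+1)%:R * r ^+ 2 + (K.+1)%:R * w%:R * r + w%:R) in
  [/\ lmin <= Lam1 ->
        l = (1 - w%:R * lmin * (1 / Rb + 1 / Ra))
            / (1 - w%:R * lmin * (3 / Rb + 1 / Ra))
            * ((2 * (K.+1)%:R / Rb + K%:R * w%:R / Ra)
               / ((K.+1)%:R / Rb + K%:R * w%:R / Ra)),
      Lam1 < lmin <= Lam2 ->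
        l = (1 - w%:R * lmin * (1 / Rb + 1 / Ra))
            / (1 - w%:R * lmin * ((2 * K%:R - 1) / Rb + 1 / Ra))
            * ((2 * (K.+1)%:R / Rb + 2 * w%:R / Ra)
               / ((K.+1)%:R / Rb + K%:R * w%:R / Ra)) &
      Lam2 < lmin ->
        l = 2 * ((1 - w%:R * lmin * (K%:R / Rb + 1 / Ra))
                 / (1 - w%:R * lmin * ((2 * K%:R - 1) / Rb + 1 / Ra)))].
Proof.
move=> K_ge2 w_gt0 Ra_gt0 Ra_lt_Rb hw lmin_gt0 optHD optFD _ /andP[eta_gt0 eta_lt1].
move=> dHD dFD l r Lam1 Lam2.
have Rb_gt0 := lt_trans Ra_gt0 Ra_lt_Rb; have lmin_ge0 := ltW lmin_gt0.
have ln_neq0 : ln (1 - eta) != 0.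
  by rewrite lt_eqF // ln_lt0 //; apply/andP; split; lra.
have -> : l = tFD / tHD by rewrite /l /dHD /dFD div_ratio divff ?oppr_eq0 // mul1r.
have HD_low := line_HD_opt_low Ra_gt0 Rb_gt0 K_ge2 w_gt0 lmin_ge0 hw optHD.
have HD_high := line_HD_opt_high Ra_gt0 Rb_gt0 K_ge2 w_gt0 lmin_ge0 hw optHD.
have FD_low := line_FD_opt_low Ra_gt0 Rb_gt0 K_ge2 w_gt0 lmin_ge0 hw optFD.
have FD_high := line_FD_opt_high Ra_gt0 Rb_gt0 K_ge2 w_gt0 lmin_ge0 hw optFD.
have Lam1_le : Lam1 <= Lam2 := Lam1_le_Lam2 K Ra_gt0 Rb_gt0 w_gt0.
split => [low | /andP[high low] | high].
- by rewrite (HD_low low) (FD_low (le_trans low Lam1_le)) div_ratio.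
- by rewrite (HD_high high) (FD_low low) div_ratio.
rewrite (HD_high (le_lt_trans Lam1_le high)) (FD_high high) div_ratio mulrC.
by rewrite (DHD1_div_DFD0 Ra_gt0 Rb_gt0 K_ge2 w_gt0).
Qed.
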